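(* Let $\mathcal{R}=\{z\in\mathbb{C}:\Re(z)>0\}$ and let $\Phi:\mathcal{R}\to\mathbb{C}$ be analytic and satisfy: (a) for all $0<a<b<\infty$, $\lim_{y\to\pm\infty} e^{-\pi|y|}\int_a^b\left|\frac{\Phi(x+iy)}{x+iy}\right|\mathrm{d}x=0$; (b) for every $\eta>0$, $\sup_{x\ge\eta}\int_{-\infty}^\infty\left|\frac{\Phi(x+iy)}{x+iy}\right|e^{-\pi|y|}\,\mathrm{d}y<\infty$; (c) $\lim_{x\to\infty}\int_{-\infty}^\infty\left|\frac{\Phi(x+iy)}{x+iy}\right|e^{-\pi|y|}\,\mathrm{d}y=0$. Let $\beta>0$ with $\beta-\frac12\notin\mathbb{Z}$, and for $z$ with $|\Re(z)|\ne\beta$ define $$I(\beta,\Phi;z)=\frac{1}{2\pi i}\int_{\beta-i\infty}^{\beta+i\infty}\left(\frac{\cos\pi z}{\cos\pi w}\right)\left(\frac{2w}{z^2-w^2}\right)\Phi(w)\,\mathrm{d}w,$$ and $B(\beta,\Phi)=\frac{2}{\pi}\int_{-\infty}^{\infty}\left|\frac{\Phi(\beta+iv)}{\beta+iv}\right|e^{-\pi|v|}\,\mathrm{d}v$. Then for every $z=x+iy$ with $|x|\ne\beta$, $$|I(\beta,\Phi;z)|\le B(\beta,\Phi)\,|\sec\pi\beta|\left(1+\frac{|z|}{\bigl||x|-\beta\bigr|}\right)e^{\pi|y|}.$$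
   Context: Under the hypotheses the integrand defining $I(\beta,\Phi;z)$ is integrable along the line $\Re(w)=\beta$. *)

From HB Require Import structures.
From mathcomp Require Import all_boot all_order all_algebra.
From mathcomp Require Import all_classical all_reals all_analysis.
From mathcomp Require Import complex.
Set Implicit Arguments. Unset Strict Implicit. Unset Printing Implicit Defensive.
Import Order.TTheory GRing.Theory Num.Theory.
Import numFieldNormedType.Exports.
Local Open Scope ring_scope.
Local Open Scope complex_scope.

Section Defs.
Variable R : realType.
Local Notation C := R[i].

Definition cRe (z : C) : R := complex.Re z.
Definition cIm (z : C) : R := complex.Im z.
Definition cabs (z : C) : R := Num.sqrt (cRe z ^+ 2 + cIm z ^+ 2).

Definition mkC (x y : R) : C := Complex x y.

Definition coshR (t : R) : R := (expR t + expR (- t)) / 2.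
Definition sinhR (t : R) : R := (expR t - expR (- t)) / 2.

(* complex cosine: cos(a + i b) = cos a cosh b - i sin a sinh b *)
Definition ccos (z : C) : C :=
  Complex (cos (cRe z) * coshR (cIm z)) (- (sin (cRe z) * sinhR (cIm z))).

Definition right_half_plane : set C := [set z | 0 < cRe z].

Definition holomorphic_on (D : set C) (f : C -> C) : Prop :=
  forall w, D w -> exists l : C, forall eps : R, 0 < eps ->
    exists2 delta : R, 0 < delta & forall h : C, h != 0 -> cabs h < delta ->
      w + h \in D -> cabs ((f (w + h) - f w) / h - l) < eps.

Definition cintegral (f : R -> C) : C :=
  Complex (Rintegral lebesgue_measure setT (fun v => cRe (f v)))
          (Rintegral lebesgue_measure setT (fun v => cIm (f v))).

(* I(beta, Phi; z) = 1/(2 pi i) int_{beta - i oo}^{beta + i oo}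
     (cos pi z / cos pi w) (2 w / (z^2 - w^2)) Phi(w) dw,
   with the contour parametrised by w = beta + i v, dw = i dv. *)
Definition piC : C := (pi : R)%:C.
Definition Iint (beta : R) (Phi : C -> C) (z : C) : C :=
  (2 * piC * 'i)^-1 *
  cintegral (fun v => let w := mkC beta v in
     (ccos (piC * z) / ccos (piC * w)) * (2 * w / (z ^+ 2 - w ^+ 2)) * Phi w * 'i).

Definition Bconst (beta : R) (Phi : C -> C) : R :=
  2 / pi * Rintegral lebesgue_measure setT
    (fun v => cabs (Phi (mkC beta v) / mkC beta v) * expR (- pi * `|v|)).

End Defs.
Arguments right_half_plane {R}.

From HB Require Import structures.
From mathcomp Require Import all_boot all_order all_algebra.
From mathcomp Require Import all_classical all_reals all_analysis.
From mathcomp Require Import complex.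
From mathcomp Require Import ring lra.
From mathcomp Require Import measurable_realfun.
Import Order.TTheory GRing.Theory Num.Theory.
Import numFieldNormedType.Exports.
Local Open Scope ring_scope.
Local Open Scope classical_set_scope.
Local Open Scope complex_scope.

Set Implicit Arguments.
Unset Strict Implicit.

(* Parametrise the contour by w = beta + i v.  On it
   |cos (pi w)| >= |cos (pi beta)| cosh (pi v) >= |cos (pi beta)| e^(pi |v|) / 2,
   while |cos (pi z)| <= e^(pi |y|).  Moreover |z^2 - w^2| = |w - z| |w + z|
   with both factors at least d = ||x| - beta|, which together with
   |w|^2 <= |z^2 - w^2| + |z|^2 and 2 |z| <= |w - z| + |w + z| gives
   |w|^2 <= (1 + |z| / d) |z^2 - w^2|.  So the integrand is bounded by
   4 e^(pi |y|) / |cos (pi beta)| (1 + |z| / d) |Phi(w) / w| e^(-pi |v|),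
   which is integrable by hypothesis (b) at x = beta, and the modulus of an
   integral is at most the integral of the modulus.  Analyticity of Phi only
   serves to make the integrand measurable. *)

Section ComplexModulus.
Variable R : realType.
Local Notation C := R[i].

Lemma cabsE (z : C) : cabs z = Normc.normc z.
Proof. by case: z. Qed.

Lemma cabs_ge0 (z : C) : 0 <= cabs z.
Proof. exact: sqrtr_ge0. Qed.

Lemma cabs_gt0 (z : C) : (0 < cabs z) = (z != 0).
Proof.
rewrite lt_def cabs_ge0 andbT; apply/idP/idP.
  by apply: contra => /eqP ->; rewrite cabsE Normc.normc0.
by apply: contra => /eqP; rewrite cabsE => /Normc.eq0_normc ->.
Qed.

Lemma cabsM (a b : C) : cabs (a * b) = cabs a * cabs b.
Proof. by rewrite !cabsE Normc.normcM. Qed.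

Lemma cabsV (a : C) : cabs a^-1 = (cabs a)^-1.
Proof. by rewrite !cabsE Normc.normcV. Qed.

Lemma cabsN (a : C) : cabs (- a) = cabs a.
Proof. by rewrite !cabsE normcN. Qed.

Lemma cabsMn (a : C) n : cabs (a *+ n) = cabs a *+ n.
Proof. by rewrite !cabsE normcMn. Qed.

Lemma ler_cabsD (a b : C) : cabs (a + b) <= cabs a + cabs b.
Proof. by rewrite !cabsE le_normcD. Qed.

Lemma cabs_real (a : R) : cabs a%:C = `|a|.
Proof. by rewrite /cabs /cRe /cIm /= expr0n /= addr0 sqrtr_sqr. Qed.

Lemma cabs_imaginary (a : R) : cabs (mkC 0 a) = `|a|.
Proof. by rewrite /cabs /cRe /cIm /= expr0n /= add0r sqrtr_sqr. Qed.

Lemma cabs_i : cabs ('i : C) = 1.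
Proof. by rewrite -[X in cabs X]/(mkC 0 1) cabs_imaginary normr1. Qed.

Lemma cabs2 : cabs (2 : C) = 2.
Proof. by rewrite cabsMn -[1 : C]/(1%:C) cabs_real normr1. Qed.

Lemma ler_norm_sqrt (a b : R) : `|a| <= Num.sqrt (a ^+ 2 + b ^+ 2).
Proof. by rewrite -sqrtr_sqr ler_sqrt ?addr_ge0 ?sqr_ge0 // lerDl sqr_ge0. Qed.

Lemma cRe_le_cabs (z : C) : `|cRe z| <= cabs z.
Proof. exact: ler_norm_sqrt. Qed.

Lemma cIm_le_cabs (z : C) : `|cIm z| <= cabs z.
Proof. by rewrite /cabs addrC; exact: ler_norm_sqrt. Qed.

Lemma cReD (a b : C) : cRe (a + b) = cRe a + cRe b. Proof. by case: a; case: b. Qed.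
Lemma cImD (a b : C) : cIm (a + b) = cIm a + cIm b. Proof. by case: a; case: b. Qed.
Lemma cReN (a : C) : cRe (- a) = - cRe a. Proof. by case: a. Qed.
Lemma cImN (a : C) : cIm (- a) = - cIm a. Proof. by case: a. Qed.
Lemma cReM (a b : C) : cRe (a * b) = cRe a * cRe b - cIm a * cIm b.
Proof. by case: a; case: b. Qed.
Lemma cImM (a b : C) : cIm (a * b) = cRe a * cIm b + cIm a * cRe b.
Proof. by case: a; case: b. Qed.
Lemma cReV (a : C) : cRe a^-1 = cRe a / (cRe a ^+ 2 + cIm a ^+ 2).
Proof. by case: a. Qed.
Lemma cImV (a : C) : cIm a^-1 = - cIm a / (cRe a ^+ 2 + cIm a ^+ 2).
Proof. by case: a => a b; rewrite /cIm /= mulNr. Qed.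

Lemma cnorm2_neq0 (a : C) : a != 0 -> cRe a ^+ 2 + cIm a ^+ 2 != 0.
Proof. by rewrite -cabs_gt0 sqrtr_gt0; exact: lt0r_neq0. Qed.

End ComplexModulus.

Section ComplexIntegral.
Variable R : realType.
Local Notation C := R[i].
Local Notation mu := (@lebesgue_measure R).

Lemma ler_dot_sqrt (A B a b : R) :
  A * a + B * b <= Num.sqrt (A ^+ 2 + B ^+ 2) * Num.sqrt (a ^+ 2 + b ^+ 2).
Proof.
rewrite -sqrtrM ?addr_ge0 ?sqr_ge0 //; apply: le_trans (ler_norm _) _.
rewrite -sqrtr_sqr ler_sqrt ?mulr_ge0 ?addr_ge0 ?sqr_ge0 //.
have := sqr_ge0 (A * b - B * a); nra.
Qed.

Lemma integrable_realZl (k : R) (f : R -> R) : mu.-integrable setT (EFin \o f) ->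
  mu.-integrable setT (EFin \o (fun v => k * f v)).
Proof.
move=> i; apply: (eq_integrable measurableT _ _ _ (integrableZl measurableT k i)).
by move=> v _ /=; rewrite -EFinM.
Qed.

(* With (A, B) the integral, |A, B|^2 = int (A Re g + B Im g) <= |A, B| int h
   by Cauchy-Schwarz in the plane. *)
Lemma cabs_cintegral_le (g : R -> C) (h : R -> R) :
  measurable_fun setT (fun v => cRe (g v)) ->
  measurable_fun setT (fun v => cIm (g v)) ->
  mu.-integrable setT (EFin \o h) -> (forall v, cabs (g v) <= h v) ->
  cabs (cintegral g) <= Rintegral mu setT h.
Proof.
move=> mRe mIm ih gh.
have dominated (f : R -> R) : measurable_fun setT f ->
    (forall v, `|f v| <= cabs (g v)) -> mu.-integrable setT (EFin \o f).
  move=> mf fg; apply: le_integrable ih => //; first exact/measurable_EFinP.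
  move=> v _; rewrite /= lee_fin; apply: le_trans (fg v) _.
  exact: le_trans (gh v) (ler_norm _).
have iRe := dominated _ mRe (fun v => cRe_le_cabs (g v)).
have iIm := dominated _ mIm (fun v => cIm_le_cabs (g v)).
set A := Rintegral mu setT (fun v => cRe (g v)).
set B := Rintegral mu setT (fun v => cIm (g v)).
have -> : cabs (cintegral g) = Num.sqrt (A ^+ 2 + B ^+ 2) by [].
set S := Num.sqrt _.
have S0 : 0 <= S by exact: sqrtr_ge0.
have int_h_ge0 : 0 <= Rintegral mu setT h.
  by apply: Rintegral_ge0 => v _; exact: le_trans (cabs_ge0 _) (gh v).
have S2_le : S ^+ 2 <= S * Rintegral mu setT h.
  have -> : S ^+ 2 = Rintegral mu setT (fun v => A * cRe (g v) + B * cIm (g v)).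
    rewrite sqr_sqrtr ?addr_ge0 ?sqr_ge0 // RintegralD //; last 2 first.
    - exact: integrable_realZl.
    - exact: integrable_realZl.
    by rewrite !RintegralZl // !expr2.
  rewrite -RintegralZl //; apply: le_Rintegral => //.
  - apply: (eq_integrable measurableT _ _ _
      (integrableD measurableT (integrable_realZl A iRe) (integrable_realZl B iIm))).
    by move=> v _.
  - exact: integrable_realZl.
  - move=> v _; apply: le_trans (ler_dot_sqrt _ _ _ _) _.
    by apply: ler_wpM2l => //; exact: gh.
have [->|S_neq0] := eqVneq S 0; first by [].
by rewrite expr2 ler_pM2l // lt_def S_neq0 S0 in S2_le.
Qed.

End ComplexIntegral.

Section ComplexContinuity.
Variable R : realType.
Local Notation C := R[i].

Definition ccontinuous (F : R -> C) := forall x,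
  {for x, continuous (fun v => cRe (F v))} /\ {for x, continuous (fun v => cIm (F v))}.

Lemma ccontinuous_cst (c : C) : ccontinuous (fun _ => c).
Proof. by split; exact: cvg_cst. Qed.

Lemma ccontinuousD (F G : R -> C) :
  ccontinuous F -> ccontinuous G -> ccontinuous (fun v => F v + G v).
Proof.
move=> cF cG x; have [F1 F2] := cF x; have [G1 G2] := cG x; split.
- by rewrite (funext (fun v => cReD (F v) (G v))); exact: continuousD.
- by rewrite (funext (fun v => cImD (F v) (G v))); exact: continuousD.
Qed.

Lemma ccontinuousN (F : R -> C) : ccontinuous F -> ccontinuous (fun v => - F v).
Proof.
move=> cF x; have [F1 F2] := cF x; split.
- by rewrite (funext (fun v => cReN (F v))); exact: continuousN.
- by rewrite (funext (fun v => cImN (F v))); exact: continuousN.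
Qed.

Lemma ccontinuousM (F G : R -> C) :
  ccontinuous F -> ccontinuous G -> ccontinuous (fun v => F v * G v).
Proof.
move=> cF cG x; have [F1 F2] := cF x; have [G1 G2] := cG x; split.
- by rewrite (funext (fun v => cReM (F v) (G v))); apply: continuousB; exact: continuousM.
- by rewrite (funext (fun v => cImM (F v) (G v))); apply: continuousD; exact: continuousM.
Qed.

Lemma continuous_cnorm2 (F : R -> C) x : ccontinuous F ->
  {for x, continuous (fun v => cRe (F v) ^+ 2 + cIm (F v) ^+ 2)}.
Proof.
by move=> cF; have [F1 F2] := cF x; apply: continuousD; exact: continuousM.
Qed.

Lemma ccontinuousV (F : R -> C) : ccontinuous F -> (forall v, F v != 0) ->
  ccontinuous (fun v => (F v)^-1).
Proof.
move=> cF F_neq0 x; have [F1 F2] := cF x.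
have N : {for x, continuous (fun v => (cRe (F v) ^+ 2 + cIm (F v) ^+ 2)^-1)}.
  by apply: continuousV; [exact: cnorm2_neq0|exact: continuous_cnorm2].
split.
- by rewrite (funext (fun v => cReV (F v))); exact: continuousM.
- by rewrite (funext (fun v => cImV (F v))); apply: continuousM => //; exact: continuousN.
Qed.

Lemma continuous_cabs (F : R -> C) : ccontinuous F -> continuous (fun v => cabs (F v)).
Proof.
move=> cF x; apply: (continuous_comp (f := fun v => cRe (F v) ^+ 2 + cIm (F v) ^+ 2)).
  exact: continuous_cnorm2.
exact: sqrt_continuous.
Qed.

Lemma continuous_coshR : continuous (@coshR R).
Proof.
move=> x; apply: (continuousM (s := fun t => expR t + expR (- t))); last exact: cvg_cst.
apply: continuousD; first exact: continuous_expR.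
by apply: continuous_comp; [exact: continuousN|exact: continuous_expR].
Qed.

Lemma continuous_sinhR : continuous (@sinhR R).
Proof.
move=> x; apply: (continuousM (s := fun t => expR t - expR (- t))); last exact: cvg_cst.
apply: continuousB; first exact: continuous_expR.
by apply: continuous_comp; [exact: continuousN|exact: continuous_expR].
Qed.

Lemma ccontinuous_ccos (F : R -> C) : ccontinuous F -> ccontinuous (fun v => ccos (F v)).
Proof.
move=> cF x; have [F1 F2] := cF x; split => /=.
- apply: continuousM.
    exact: continuous_comp F1 (@continuous_cos R _).
  exact: continuous_comp F2 (@continuous_coshR _).
- apply: continuousN; apply: continuousM.
    exact: continuous_comp F1 (@continuous_sin R _).
  exact: continuous_comp F2 (@continuous_sinhR _).
Qed.

Lemma ccontinuous_cabs_dist (F : R -> C) :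
  (forall x e, 0 < e -> exists2 d, 0 < d &
     forall t, `|x - t| < d -> cabs (F x - F t) < e) -> ccontinuous F.
Proof.
move=> H x; split; apply/cvgrPdist_lt => e e0; apply/nbhs_ballP;
  have [d d0 Hd] := H x e e0; exists d => // t /= xt;
  apply: le_lt_trans (Hd t xt).
- by have := cRe_le_cabs (F x - F t); rewrite cReD cReN.
- by have := cIm_le_cabs (F x - F t); rewrite cImD cImN.
Qed.

(* Differentiability at mkC beta x bounds the difference quotients along the
   vertical line by |f'| + 1, which gives a Lipschitz estimate near x. *)
Lemma holomorphic_on_ccontinuous_vertical (D : set C) (f : C -> C) (beta : R) :
  holomorphic_on D f -> (forall v, D (mkC beta v)) ->
  ccontinuous (fun v => f (mkC beta v)).
Proof.
move=> hol Dline; apply: ccontinuous_cabs_dist => x e e0.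
have [l Hl] := hol (mkC beta x) (Dline x).
have [d1 d1_gt0 Hd1] := Hl 1 ltr01.
have L0 : 0 < cabs l + 1 by rewrite ltr_wpDl // cabs_ge0.
exists (Num.min d1 (e / (cabs l + 1))); first by rewrite lt_min d1_gt0 divr_gt0.
move=> t; rewrite lt_min => /andP[xt_d1 xt_e].
have [->|t_neq_x] := eqVneq t x.
  by rewrite subrr -[0 : C]/(0%:C) cabs_real normr0.
set k := mkC 0 (t - x).
have k_neq0 : k != 0.
  by apply: contra t_neq_x => /eqP/(congr1 (@cIm R)) /eqP; rewrite /cIm /= subr_eq0.
have cabs_k : cabs k = `|x - t| by rewrite cabs_imaginary distrC.
have xk_t : mkC beta x + k = mkC beta t.
  by rewrite /k /mkC /=; congr Complex; rewrite ?addr0 // addrC subrK.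
have := Hd1 k k_neq0; rewrite cabs_k xk_t inE => /(_ xt_d1 (Dline t)).
set Q := (_ - _) / k => HQ.
have QL : cabs Q <= cabs l + 1.
  rewrite -[Q](subrK l); apply: le_trans (ler_cabsD _ _) _.
  by rewrite addrC lerD2l ltW.
have -> : f (mkC beta x) - f (mkC beta t) = - (Q * k) by rewrite /Q divfK // opprB.
rewrite cabsN cabsM cabs_k.
apply: le_lt_trans (ler_wpM2r (normr_ge0 _) QL) _.
by rewrite mulrC -ltr_pdivlMr.
Qed.

End ComplexContinuity.

Section CosineBounds.
Variable R : realType.
Local Notation C := R[i].

Lemma cos_addnpi (a : R) n : cos (a + pi *+ n) = (-1) ^+ n * cos a.
Proof.
elim: n => [|n IH]; first by rewrite mulr0n addr0 expr0 mul1r.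
by rewrite mulrSr addrA cosDpi IH exprS mulN1r mulNr.
Qed.

(* Write beta = n + f with n = floor beta; then cos (pi beta) = +-cos (pi f)
   with 0 <= f < 1, which vanishes only at f = 1/2. *)
Lemma cos_pi_neq0 (beta : R) : 0 <= beta ->
  (forall k : int, beta - 2^-1 != k%:~R) -> cos (pi * beta) != 0.
Proof.
move=> beta_ge0 not_half_int; set n := Num.truncn beta.
have /andP[n_le n_gt] := Num.Theory.truncn_itv beta_ge0.
set f := beta - n%:R.
have f_ge0 : 0 <= f by rewrite subr_ge0.
have f_lt1 : f < 1 by rewrite /f ltrBlDr [1 + _]addrC natr1.
have -> : pi * beta = pi * f + pi *+ n by rewrite /f mulrBr mulr_natr subrK.
rewrite cos_addnpi mulf_eq0 negb_or signr_eq0 /=; apply/eqP => cos_f.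
have pif : pi * f = pi / 2.
  apply: cos_inj; last by rewrite cos_f cos_pihalf.
  - by rewrite in_itv /= mulr_ge0 ?pi_ge0 //= ler_piMr ?pi_ge0 // ltW.
  - rewrite in_itv /= divr_ge0 ?pi_ge0 //= ler_pdivrMr // ler_peMr ?pi_ge0 //.
    by rewrite ler1n.
have f_half : f = 2^-1 by apply: (@mulfI _ pi); rewrite ?pif // gt_eqF // pi_gt0.
by move: (not_half_int n); rewrite -f_half /f opprB addrC subrK eqxx.
Qed.

Lemma half_expR_le_coshR (b : R) : expR `|b| / 2 <= coshR b.
Proof.
rewrite /coshR ler_pM2r ?invr_gt0 //.
have := expR_gt0 b; have := expR_gt0 (- b); case: (ler0P b); lra.
Qed.

Lemma coshR_le_expR (b : R) : coshR b <= expR `|b|.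
Proof.
have : expR b <= expR `|b| by rewrite ler_expR ler_norm.
have : expR (- b) <= expR `|b| by rewrite ler_expR -normrN ler_norm.
rewrite /coshR; lra.
Qed.

Lemma coshR_ge0 (b : R) : 0 <= coshR b.
Proof. by apply: le_trans (half_expR_le_coshR b); rewrite divr_ge0 ?expR_ge0. Qed.

Lemma coshR2_sub_sinhR2 (b : R) : coshR b ^+ 2 - sinhR b ^+ 2 = 1.
Proof.
have e : expR b * expR (- b) = 1 by rewrite -expRD subrr expR0.
rewrite /coshR /sinhR; set p := expR b in e *; set q := expR (- b) in e *.
by transitivity (p * q); [rewrite mulr2n; field | exact: e].
Qed.

(* |cos (a + ib)|^2 = cosh^2 b - sin^2 a. *)
Lemma cabs_ccos_le (u : C) : cabs (ccos u) <= expR `|cIm u|.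
Proof.
apply: le_trans (coshR_le_expR _).
rewrite -[X in _ <= X]ger0_norm ?coshR_ge0 // -sqrtr_sqr /cabs ler_sqrt ?sqr_ge0 //.
set c := cos (cRe u); set s := sin (cRe u).
set Ch := coshR (cIm u); set Sh := sinhR (cIm u).
have -> : (c * Ch) ^+ 2 + (- (s * Sh)) ^+ 2
    = (c ^+ 2 + s ^+ 2) * Ch ^+ 2 - s ^+ 2 * (Ch ^+ 2 - Sh ^+ 2) by ring.
by rewrite cos2Dsin2 coshR2_sub_sinhR2 mul1r mulr1 lerBlDr lerDl sqr_ge0.
Qed.

Lemma cabs_ccos_ge (u : C) : `|cos (cRe u)| * coshR (cIm u) <= cabs (ccos u).
Proof.
rewrite -[X in X <= _]ger0_norm ?mulr_ge0 ?coshR_ge0 // -sqrtr_sqr /cabs.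
rewrite ler_sqrt ?addr_ge0 ?sqr_ge0 //.
by rewrite /ccos /cRe /cIm /= exprMn real_normK ?num_real // -exprMn lerDl sqr_ge0.
Qed.

End CosineBounds.

Section ContourIntegrand.
Variable R : realType.
Local Notation C := R[i].

Lemma sqr_cabs_le_sub_sqr (z w : C) (d : R) : 0 < d ->
  d <= cabs (w - z) -> d <= cabs (w + z) ->
  cabs w ^+ 2 <= (1 + cabs z / d) * cabs (z ^+ 2 - w ^+ 2).
Proof.
move=> d_gt0 d_le_p d_le_q.
set p := cabs (w - z) in d_le_p *; set q := cabs (w + z) in d_le_q *.
have Epq : cabs (z ^+ 2 - w ^+ 2) = p * q.
  by rewrite (_ : _ - _ = - ((w - z) * (w + z))) ?cabsN ?cabsM //; ring.
have Hw : cabs w ^+ 2 <= p * q + cabs z ^+ 2.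
  rewrite -Epq !expr2 -!cabsM -!expr2.
  by have := ler_cabsD (- (z ^+ 2 - w ^+ 2)) (z ^+ 2); rewrite cabsN opprB subrK.
rewrite Epq.
have Hz : cabs z *+ 2 <= p + q.
  rewrite -cabsMn (_ : z *+ 2 = (w + z) - (w - z)); last by rewrite mulr2n; ring.
  by apply: le_trans (ler_cabsD _ _) _; rewrite cabsN addrC.
set Z := cabs z in Hw Hz *; have Z_ge0 : 0 <= Z by exact: cabs_ge0.
have Zd : Z * d <= p * q by rewrite mulr2n in Hz; nra.
set t := Z / d; have t_ge0 : 0 <= t by rewrite divr_ge0 // ltW.
rewrite (_ : Z = t * d) in Zd Hw; last by rewrite /t divfK // gt_eqF.
nra.
Qed.

Lemma cabs_line_sub_ge (beta : R) (z : C) (v : R) : 0 < beta ->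
  `| `|cRe z| - beta | <= cabs (mkC beta v - z).
Proof.
move=> beta_gt0; apply: le_trans (cRe_le_cabs _).
rewrite cReD cReN /cRe /= distrC.
by apply: le_trans (ler_dist_dist _ _); rewrite (gtr0_norm beta_gt0).
Qed.

Lemma cabs_line_add_ge (beta : R) (z : C) (v : R) : 0 < beta ->
  `| `|cRe z| - beta | <= cabs (mkC beta v + z).
Proof.
move=> beta_gt0; apply: le_trans (cRe_le_cabs _).
have -> : cRe (mkC beta v + z) = cRe z - - beta by rewrite cReD opprK addrC.
by rewrite -{1}[beta](gtr0_norm beta_gt0) -(normrN beta); exact: ler_dist_dist.
Qed.

Lemma rational_factor_le (z w p : C) (d : R) : 0 < d -> w != 0 ->
  d <= cabs (w - z) -> d <= cabs (w + z) ->
  cabs (2 * w / (z ^+ 2 - w ^+ 2) * p) <= 2 * (1 + cabs z / d) * cabs (p / w).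
Proof.
move=> d_gt0 w_neq0 d_le_p d_le_q.
have zw_gt0 : 0 < cabs (z ^+ 2 - w ^+ 2).
  have -> : z ^+ 2 - w ^+ 2 = - ((w - z) * (w + z)) by ring.
  by rewrite cabsN cabsM mulr_gt0 // (lt_le_trans d_gt0).
have w_gt0 : 0 < cabs w by rewrite cabs_gt0.
rewrite !cabsM !cabsV cabs2; set Q := cabs (z ^+ 2 - w ^+ 2) in zw_gt0 *.
have ratio_le : cabs w / Q <= (1 + cabs z / d) / cabs w.
  by rewrite ler_pdivrMr // mulrAC ler_pdivlMr // -expr2; exact: sqr_cabs_le_sub_sqr.
have -> : 2 * cabs w * Q^-1 * cabs p = 2 * cabs p * (cabs w / Q) by ring.
have -> : 2 * (1 + cabs z / d) * (cabs p * (cabs w)^-1)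
    = 2 * cabs p * ((1 + cabs z / d) / cabs w) by ring.
by rewrite ler_wpM2l // mulr_ge0 // cabs_ge0.
Qed.

Lemma cabs_ccos_pi_le (z : C) : cabs (ccos (piC R * z)) <= expR (pi * `|cIm z|).
Proof.
apply: le_trans (cabs_ccos_le _) _.
by rewrite cImM /cRe /cIm /= mul0r addr0 normrM gtr0_norm ?pi_gt0.
Qed.

Lemma cabs_ccos_line_ge (beta v : R) :
  `|cos (pi * beta)| * expR (pi * `|v|) / 2 <= cabs (ccos (piC R * mkC beta v)).
Proof.
apply: le_trans (cabs_ccos_ge _).
rewrite cReM cImM /cRe /cIm /= !mul0r subr0 addr0 -mulrA ler_wpM2l //.
by apply: le_trans (half_expR_le_coshR _); rewrite normrM gtr0_norm ?pi_gt0.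
Qed.

Lemma ccos_line_neq0 (beta v : R) : cos (pi * beta) != 0 ->
  ccos (piC R * mkC beta v) != 0.
Proof.
move=> cos_neq0; rewrite -cabs_gt0; apply: lt_le_trans (cabs_ccos_line_ge _ _).
by rewrite !mulr_gt0 ?expR_gt0 ?normr_gt0.
Qed.

Lemma cos_ratio_le (z : C) (beta v : R) : cos (pi * beta) != 0 ->
  cabs (ccos (piC R * z) / ccos (piC R * mkC beta v))
  <= 2 * expR (pi * `|cIm z|) / `|cos (pi * beta)| * expR (- pi * `|v|).
Proof.
move=> cos_neq0; set c0 := `|cos (pi * beta)|.
have c0_gt0 : 0 < c0 by rewrite normr_gt0.
have den_gt0 : 0 < c0 * expR (pi * `|v|) / 2 by rewrite !mulr_gt0 ?expR_gt0.
rewrite cabsM cabsV.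
apply: le_trans (ler_pM (cabs_ge0 _) _ (cabs_ccos_pi_le z)
  (_ : _ <= (c0 * expR (pi * `|v|) / 2)^-1)) _.
- by rewrite invr_ge0 cabs_ge0.
- by rewrite lef_pV2 ?posrE ?(lt_le_trans den_gt0) // cabs_ccos_line_ge.
rewrite mulNr expRN le_eqVlt; apply/orP; left; apply/eqP.
by field; rewrite !gt_eqF ?expR_gt0.
Qed.

End ContourIntegrand.

Section ContourIntegral.
Variable R : realType.
Local Notation C := R[i].

Definition contour_integrand (beta : R) (Phi : C -> C) (z : C) (v : R) : C :=
  let w := mkC beta v in
  (ccos (piC R * z) / ccos (piC R * w)) * (2 * w / (z ^+ 2 - w ^+ 2)) * Phi w * 'i.

Lemma Iint_contour_integrand (beta : R) (Phi : C -> C) (z : C) :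
  Iint beta Phi z = (2 * piC R * 'i)^-1 * cintegral (contour_integrand beta Phi z).
Proof. by []. Qed.

Lemma line_neq0 (beta v : R) : 0 < beta -> mkC beta v != 0.
Proof.
move=> beta_gt0; rewrite -cabs_gt0; apply: lt_le_trans (cRe_le_cabs _).
by rewrite /cRe /= gtr0_norm.
Qed.

Lemma sub_sqr_line_neq0 (beta v : R) (z : C) : 0 < beta -> `|cRe z| != beta ->
  z ^+ 2 - mkC beta v ^+ 2 != 0.
Proof.
move=> beta_gt0 hz; rewrite -cabs_gt0.
have d_gt0 : 0 < `| `|cRe z| - beta | by rewrite normr_gt0 subr_eq0.
rewrite (_ : _ - _ = - ((mkC beta v - z) * (mkC beta v + z))); last by ring.
rewrite cabsN cabsM mulr_gt0 // (lt_le_trans d_gt0) //.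
  exact: cabs_line_sub_ge.
exact: cabs_line_add_ge.
Qed.

Lemma cabs_contour_integrand_le (beta : R) (Phi : C -> C) (z : C) (v : R) :
  0 < beta -> cos (pi * beta) != 0 -> `|cRe z| != beta ->
  cabs (contour_integrand beta Phi z v)
  <= 4 * expR (pi * `|cIm z|) / `|cos (pi * beta)| * (1 + cabs z / `| `|cRe z| - beta |)
     * (cabs (Phi (mkC beta v) / mkC beta v) * expR (- pi * `|v|)).
Proof.
move=> beta_gt0 cos_neq0 hz.
have d_gt0 : 0 < `| `|cRe z| - beta | by rewrite normr_gt0 subr_eq0.
rewrite /contour_integrand cabsM cabs_i mulr1 -mulrA cabsM.
apply: le_trans (ler_pM (cabs_ge0 _) (cabs_ge0 _) (cos_ratio_le z v cos_neq0)
  (rational_factor_le _ d_gt0 (line_neq0 v beta_gt0)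
     (cabs_line_sub_ge z v beta_gt0) (cabs_line_add_ge z v beta_gt0))) _.
rewrite le_eqVlt; apply/orP; left; apply/eqP; ring.
Qed.

Lemma ccontinuous_line (beta : R) : ccontinuous (mkC beta).
Proof. by split; [exact: cvg_cst | exact: cvg_id]. Qed.

Lemma ccontinuous_contour_integrand (beta : R) (Phi : C -> C) (z : C) :
  holomorphic_on right_half_plane Phi -> 0 < beta -> cos (pi * beta) != 0 ->
  `|cRe z| != beta -> ccontinuous (contour_integrand beta Phi z).
Proof.
move=> hol beta_gt0 cos_neq0 hz.
have cPhi := holomorphic_on_ccontinuous_vertical hol (fun v => beta_gt0).
have cw := ccontinuous_line beta.
apply: ccontinuousM (ccontinuous_cst _); apply: ccontinuousM cPhi.
apply: ccontinuousM.
  apply: ccontinuousM (ccontinuous_cst _) _; apply: ccontinuousV.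
    by apply: ccontinuous_ccos; apply: ccontinuousM (ccontinuous_cst _) cw.
  by move=> v; exact: ccos_line_neq0.
apply: ccontinuousM (ccontinuousM (ccontinuous_cst _) cw) _.
apply: ccontinuousV; last by move=> v; exact: sub_sqr_line_neq0.
apply: ccontinuousD (ccontinuous_cst _) (ccontinuousN _).
by rewrite /GRing.exp /=; exact: ccontinuousM.
Qed.

Lemma continuous_weight_line (beta : R) (Phi : C -> C) :
  holomorphic_on right_half_plane Phi -> 0 < beta ->
  continuous (fun v => cabs (Phi (mkC beta v) / mkC beta v) * expR (- pi * `|v|)).
Proof.
move=> hol beta_gt0 x.
apply: (continuousM (s := fun v => cabs (Phi (mkC beta v) / mkC beta v))).
  apply: continuous_cabs; apply: ccontinuousM.
    exact: holomorphic_on_ccontinuous_vertical hol (fun v => beta_gt0).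
  by apply: ccontinuousV (ccontinuous_line beta) _ => v; exact: line_neq0.
apply: (continuous_comp (f := fun v => - pi * `|v|)); last exact: continuous_expR.
apply: (continuousM (s := fun _ => - pi)); first exact: cvg_cst.
exact: norm_continuous.
Qed.

End ContourIntegral.

Unset Implicit Arguments.

Theorem lemma3p2 (R : realType) (Phi : R[i] -> R[i]) (beta : R) :
  holomorphic_on right_half_plane Phi ->
  (forall a b : R, 0 < a -> a < b ->
     ((fun y : R => expR (- pi * `|y|) *
        Rintegral (@lebesgue_measure R) `[a, b]
          (fun x : R => cabs (Phi (mkC x y) / mkC x y))) @ +oo --> (0 : R)) /\
     ((fun y : R => expR (- pi * `|y|) *
        Rintegral (@lebesgue_measure R) `[a, b]
          (fun x : R => cabs (Phi (mkC x y) / mkC x y))) @ -oo --> (0 : R))) ->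
  (forall eta : R, 0 < eta -> exists M : R, forall x : R, eta <= x ->
     ((\int[@lebesgue_measure R]_(y in [set: R])
        ((cabs (Phi (mkC x y) / mkC x y) * expR (- pi * `|y|))%R)%:E) <= M%:E)%E) ->
  ((fun x : R => (\int[@lebesgue_measure R]_(y in [set: R])
        ((cabs (Phi (mkC x y) / mkC x y) * expR (- pi * `|y|))%R)%:E)%E) @ +oo
     --> (0 : \bar R)%E) ->
  0 < beta ->
  (forall k : int, beta - 2^-1 != k%:~R) ->
  forall z : R[i], `|cRe z| != beta ->
    cabs (Iint beta Phi z) <=
      Bconst beta Phi * `|(cos (pi * beta))^-1|
      * (1 + cabs z / `| `|cRe z| - beta |) * expR (pi * `|cIm z|).
Proof.
move=> hol _ hb _ beta_gt0 not_half_int z hz.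
have cos_neq0 := cos_pi_neq0 (ltW beta_gt0) not_half_int.
set h := fun v => cabs (Phi (mkC beta v) / mkC beta v) * expR (- pi * `|v|).
have h_int : (@lebesgue_measure R).-integrable setT (EFin \o h).
  have ch := continuous_weight_line hol beta_gt0.
  apply/integrableP; split; first by apply/measurable_EFinP; exact: continuous_measurable_fun.
  have h_ge0 v : 0 <= h v by rewrite mulr_ge0 ?cabs_ge0 ?expR_ge0.
  under eq_integral do rewrite /= ger0_norm ?h_ge0 //.
  have [M hM] := hb beta beta_gt0.
  exact: le_lt_trans (hM beta (lexx _)) (ltry M).
have cg := ccontinuous_contour_integrand hol beta_gt0 cos_neq0 hz.
have := cabs_cintegral_le (continuous_measurable_fun (fun v => (cg v).1))
  (continuous_measurable_fun (fun v => (cg v).2)) (integrable_realZl _ h_int)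
  (fun v => cabs_contour_integrand_le Phi v beta_gt0 cos_neq0 hz).
rewrite RintegralZl // => cint_le.
rewrite Iint_contour_integrand cabsM cabsV !cabsM cabs2 cabs_i cabs_real.
apply: le_trans (ler_wpM2l _ cint_le) _; first by rewrite invr_ge0 !mulr_ge0.
rewrite /Bconst -/h normfV gtr0_norm ?pi_gt0 // le_eqVlt; apply/orP; left; apply/eqP.
have d_neq0 : `| `|cRe z| - beta | != 0 by rewrite normr_eq0 subr_eq0.
have c_neq0 : `|cos (pi * beta)| != 0 by rewrite normr_eq0.
have : pi != 0 :> R by rewrite gt_eqF ?pi_gt0.
(* [field] cannot see through [pi], so it is abstracted first. *)
set p := pi in c_neq0 *; clearbody p => p_neq0.
by field; rewrite d_neq0 c_neq0 p_neq0.
Qed.
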